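(* Let $n, M \ge 2$ be integers and let $W_1, \dots, W_M \in \mathbb{R}^{n \times n}$ be weighted adjacency matrices (nonnegative entries) of a time-evolving graph on the fixed vertex set $\{v_1, \dots, v_n\}$, such that every row of each $W_t$ has positive sum. Let $S_t = D_t^{-1} W_t$, where $D_t = \mathrm{diag}\big(\sum_j (W_t)_{1j}, \dots, \sum_j (W_t)_{nj}\big)$, be the row-stochastic transition matrices. Let $\boldsymbol{\mu}_1 = \frac{1}{n}\mathbb{1}$ be the uniform density and define $\boldsymbol{\mu}_{t+1} = S_t^\top \boldsymbol{\mu}_t$ for $t = 1, \dots, M-1$; assume all entries of $\boldsymbol{\mu}_t$ are strictly positive for all $t \in \{1, \dots, M\}$, and let $D_{\mu_t} = \mathrm{diag}(\boldsymbol{\mu}_t)$. Define $K_t = S_t$ and $T_t = D_{\mu_{t+1}}^{-1} S_t^\top D_{\mu_t}$ for $t = 1, \dots, M-1$, and let $\mathbf{C} \in \mathbb{R}^{nM \times nM}$ be the block matrix with $n \times n$ blocks $\mathbf{C}_{[s,r]}$ ($s, r \in \{1,\dots,M\}$) given by: $\mathbf{C}_{[1,2]} = K_1$; for $2 \le t \le M-1$, $\mathbf{C}_{[t,t-1]} = \tfrac{1}{2} T_{t-1}$ and $\mathbf{C}_{[t,t+1]} = \tfrac12 K_t$; $\mathbf{C}_{[M,M-1]} = T_{M-1}$; and all other blocks zero. Then: (i) all eigenvalues of $\mathbf{C}$ are real and contained in the interval $[-1, 1]$; (ii) the spectrum of $\mathbf{C}$ is symmetric about zero, i.e., if $\lambda$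 is an eigenvalue of $\mathbf{C}$ then so is $-\lambda$.
   Context: Equivalently, $\mathbf{C} = \mathbf{B}^{-1}\mathbf{A}$, where $\mathbf{A}$ is the symmetric block-tridiagonal matrix with zero diagonal blocks, super-diagonal blocks $C_{t(t+1)} = D_{\mu_t} S_t$ and sub-diagonal blocks $C_{(t+1)t} = C_{t(t+1)}^\top$, and $\mathbf{B}$ is block diagonal with blocks $D_{\mu_1}, 2D_{\mu_2}, \dots, 2D_{\mu_{M-1}}, D_{\mu_M}$. This matrix arises from a multiview canonical correlation analysis maximizing $\sum_{t=1}^{M-1} \mathbf{f}_t^\top C_{t(t+1)} \mathbf{f}_{t+1}$ subject to $\mathbf{f}_t^\top D_{\mu_t} \mathbf{f}_t = 1$. *)

From HB Require Import structures.
From mathcomp Require Import all_boot all_order all_algebra.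
From mathcomp Require Import reals.
From mathcomp Require Import complex.
Set Implicit Arguments. Unset Strict Implicit. Unset Printing Implicit Defensive.
Import Order.TTheory GRing.Theory Num.Theory.
Local Open Scope ring_scope.

Section Defs.
Variable R : realType.
Variable n M : nat.
(* W t : 'M_n, with time index t = 0, ..., M-1 standing for W_1, ..., W_M. *)
Variable W : nat -> 'M[R]_n.

Definition degmx (t : nat) : 'M[R]_n := diag_mx (\row_i \sum_j W t i j).
Definition transmx (t : nat) : 'M[R]_n := invmx (degmx t) *m W t.

(* mu t is the column vector mu_{t+1}: mu_1 = 1/n * 1, mu_{t+1} = S_t^T mu_t *)
Fixpoint mu (t : nat) : 'cV[R]_n :=
  match t with
  | 0 => const_mx (n%:R)^-1
  | t'.+1 => (transmx t')^T *m mu t'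
  end.

Definition Dmu (t : nat) : 'M[R]_n := diag_mx (mu t)^T.

Definition Kmx (t : nat) : 'M[R]_n := transmx t.
Definition Tmx (t : nat) : 'M[R]_n :=
  invmx (Dmu t.+1) *m (transmx t)^T *m Dmu t.

(* Block (s, r) of C, with 0-based block indices (paper's [s+1, r+1]). *)
Definition Cblock (s r : nat) : 'M[R]_n :=
  if (s == 0%N) && (r == 1%N) then Kmx 0
  else if (s == M.-1) && (r.+1 == s) then Tmx M.-2
  else if (0 < s < M.-1)%N && (r.+1 == s) then 2^-1 *: Tmx r
  else if (0 < s < M.-1)%N && (r == s.+1) then 2^-1 *: Kmx s
  else 0.

(* index k of 'I_(M*n) <-> (block index, position in block), with
   k = block * n + position (lexicographic enumeration of 'I_M * 'I_n). *)
Definition blk_of (k : 'I_(M * n)) : 'I_M * 'I_n :=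
  enum_val (cast_ord (esym (mxvec_cast M n)) k).

Definition Cmx : 'M[R]_(M * n) :=
  \matrix_(k, l) Cblock (blk_of k).1 (blk_of l).1 (blk_of k).2 (blk_of l).2.
End Defs.

Definition cplx_mx (R : realType) (m : nat) (A : 'M[R]_m) : 'M[R[i]]_m :=
  map_mx (fun x => Complex x 0) A.

(* The matrix C equals B^-1 A, where B is the positive diagonal matrix with
   blocks D_mu1, 2 D_mu2, ..., 2 D_mu(M-1), D_muM and A is symmetric,
   nonnegative and supported on pairs of consecutive blocks.  Hence C is
   row-stochastic, so every eigenvalue has modulus at most 1; C is reversible
   (B C is symmetric), so the Hermitian form of a left eigenvector weighted by
   B is real and forces the eigenvalue to be real; and C only links
   consecutive blocks, so flipping the sign of every other block of an
   eigenvector turns the eigenvalue lambda into -lambda. *)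

From HB Require Import structures.
From mathcomp Require Import all_boot all_order all_algebra.
From mathcomp Require Import reals complex.
From mathcomp Require Import ring lra zify.
Import Order.TTheory GRing.Theory Num.Theory.
Set Implicit Arguments. Unset Strict Implicit. Unset Printing Implicit Defensive.
Local Open Scope ring_scope.
Local Open Scope complex_scope.

Section ComplexifiedSpectrum.
Variable R : realType.
Implicit Types (N : nat) (a : R[i]).

Lemma cplx_left_eigenP N (A : 'M[R]_N) a :
  eigenvalue (cplx_mx A) a <->
  exists2 v : 'I_N -> R[i], (exists l, v l != 0) &
    forall l, \sum_k v k * (A k l)%:C = a * v l.
Proof.
split.
- case/eigenvalueP => v /matrixP vA vn0; exists (v 0).
    have /existsP[l vl] : [exists l, v 0 l != 0].
      apply: contraR vn0; rewrite negb_exists => /forallP v0.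
      by apply/eqP/rowP => l; rewrite mxE; apply/eqP; have := v0 l; rewrite negbK.
    by exists l.
  move=> l; have := vA 0 l; rewrite !mxE => <-.
  by apply: eq_bigr => k _; rewrite mxE.
- case=> v [l vl] vA; apply/eigenvalueP; exists (\row_k v k).
    by apply/rowP => j; rewrite !mxE -vA; apply: eq_bigr => k _; rewrite !mxE.
  by apply: contraNneq vl => /rowP/(_ l); rewrite !mxE => ->.
Qed.

Lemma normr_real_complex (x : R) : `|x%:C| = `|x|%:C.
Proof. by rewrite normc_def /= expr0n addr0 sqrtr_sqr. Qed.

Lemma stochastic_eigenvalue_norm_le1 N (C : 'M[R]_N) a :
  (forall k l, 0 <= C k l) -> (forall k, \sum_l C k l = 1) ->
  eigenvalue (cplx_mx C) a -> `|a| <= 1.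
Proof.
move=> C_ge0 C_sum /cplx_left_eigenP[v [l0 vl0] vC].
have v1_gt0 : 0 < \sum_l `|v l|.
  rewrite lt0r sumr_ge0 // andbT psumr_eq0 //; apply/allPn.
  by exists l0; rewrite ?mem_index_enum // normr_eq0.
have mass : \sum_l \sum_k `|v k| * (C k l)%:C = \sum_k `|v k|.
  rewrite exchange_big; apply: eq_bigr => k _.
  by rewrite -mulr_sumr -rmorph_sum /= C_sum mulr1.
suff : `|a| * \sum_l `|v l| <= 1 * \sum_l `|v l| by rewrite ler_pM2r.
rewrite mul1r mulr_sumr -mass; apply: ler_sum => l _.
rewrite -normrM -vC; apply: le_trans (ler_norm_sum _ _ _) _.
by apply: ler_sum => k _; rewrite normrM [`|(C k l)%:C|]ger0_norm // ler0c.
Qed.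

Lemma bipartite_eigenvalue_opp N (C : 'M[R]_N) (s : 'I_N -> R) a :
  (forall k, s k ^+ 2 = 1) -> (forall k l, C k l != 0 -> s k = - s l) ->
  eigenvalue (cplx_mx C) a -> eigenvalue (cplx_mx C) (- a).
Proof.
move=> s_sqr s_flip /cplx_left_eigenP[v [l0 vl0] vC].
apply/cplx_left_eigenP; exists (fun k => (s k)%:C * v k).
  by exists l0; rewrite mulf_neq0 // fmorph_eq0 -sqrf_eq0 s_sqr oner_eq0.
move=> l; have -> : - a * ((s l)%:C * v l) = - (s l)%:C * (a * v l) by ring.
rewrite -vC mulr_sumr; apply: eq_bigr => k _.
have [->|Ckl] := eqVneq (C k l) 0; first by rewrite !mulr0.
by rewrite (s_flip k l) // rmorphN mulrA.
Qed.

Lemma reversible_eigenvalue_real N (C : 'M[R]_N) (d : 'I_N -> R) a :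
  (forall k, 0 < d k) -> (forall k l, d k * C k l = d l * C l k) ->
  eigenvalue (cplx_mx C) a -> a \is Num.real.
Proof.
move=> d_gt0 d_bal /cplx_left_eigenP[v [l0 vl0] vC].
have d_neq0 k : (d k)%:C != 0 by rewrite fmorph_eq0 gt_eqF.
have [w vE] : exists w, forall k, v k = (d k)%:C * w k.
  by exists (fun k => v k / (d k)%:C) => k; rewrite mulrC divfK.
(* The B-weighted Hermitian form P of w is a * Q with Q > 0, and P is real
   by detailed balance. *)
pose Q := \sum_l (d l)%:C * (w l * (w l)^*).
pose P := \sum_l \sum_k (d k * C k l)%:C * (w k * (w l)^*).
have PE : P = a * Q.
  rewrite /Q mulr_sumr; apply: eq_bigr => l _.
  have -> : a * ((d l)%:C * (w l * (w l)^*)) = (a * v l) * (w l)^* by rewrite vE; ring.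
  by rewrite -vC mulr_suml; apply: eq_bigr => k _; rewrite vE rmorphM /=; ring.
have PJ : P^* = P.
  rewrite /P rmorph_sum exchange_big /=; apply: eq_bigr => l _.
  rewrite rmorph_sum; apply: eq_bigr => k _.
  by rewrite rmorphM /= oppr0 complexr0 [(w _ * _)^*]rmorphM /= conjcK d_bal [w l * _]mulrC.
have QJ : Q^* = Q.
  rewrite /Q rmorph_sum; apply: eq_bigr => l _.
  by rewrite rmorphM /= oppr0 complexr0 [(w _ * _)^*]rmorphM /= conjcK [X in _ * X = _]mulrC.
have Q_neq0 : Q != 0.
  rewrite psumr_eq0 => [|l _]; last by rewrite mulr_ge0 ?mulcJ_ge0 ?ler0c ?ltW.
  have w_neq0 : w l0 != 0 by apply: contra vl0; rewrite vE => /eqP->; rewrite mulr0.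
  apply/allPn; exists l0; rewrite ?mem_index_enum //=.
  by rewrite mulf_neq0 // -sqr_normc sqrf_eq0 normr_eq0.
have /(mulIf Q_neq0) : a^* * Q = a * Q.
  by rewrite -{1}QJ -rmorphM -PE; exact: PJ.
by case: a {vC PE} => x y [] y0; rewrite complex_real; apply/eqP; lra.
Qed.
End ComplexifiedSpectrum.

Lemma invmx_diag (F : fieldType) m (d : 'rV[F]_m) :
  (forall i, d 0 i != 0) -> invmx (diag_mx d) = diag_mx (\row_i (d 0 i)^-1).
Proof.
move=> d_neq0.
have dVd : diag_mx (\row_i (d 0 i)^-1) *m diag_mx d = 1%:M.
  by apply/matrixP => i j; rewrite mulmx_diag !mxE mulVf.
have [_ d_unit] := mulmx1_unit dVd.
by rewrite -[invmx _]mul1mx -dVd -mulmxA mulmxV // mulmx1.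
Qed.

Section TimeEvolvingGraph.
Variables (R : realType) (n M : nat) (W : nat -> 'M[R]_n).
Hypothesis M_ge2 : (2 <= M)%N.
Hypothesis W_ge0 : forall t, (t < M)%N -> forall i j, 0 <= W t i j.
Hypothesis deg_gt0 : forall t, (t < M)%N -> forall i, 0 < \sum_j W t i j.
Hypothesis mu_gt0 : forall t, (t < M)%N -> forall i, 0 < mu W t i 0.

Lemma KmxE t i j : (t < M)%N -> Kmx W t i j = W t i j / \sum_k W t i k.
Proof.
move=> tM; rewrite /Kmx /transmx /degmx invmx_diag => [|i']; last first.
  by rewrite mxE gt_eqF ?deg_gt0.
by rewrite mul_diag_mx !mxE mulrC.
Qed.

Lemma Kmx_ge0 t i j : (t < M)%N -> 0 <= Kmx W t i j.
Proof. by move=> tM; rewrite KmxE // divr_ge0 ?W_ge0 ?ltW ?deg_gt0. Qed.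

Lemma sum_Kmx t i : (t < M)%N -> \sum_j Kmx W t i j = 1.
Proof.
move=> tM; under eq_bigr => j _ do rewrite KmxE //.
by rewrite -mulr_suml divff // gt_eqF ?deg_gt0.
Qed.

Lemma muS t i : mu W t.+1 i 0 = \sum_j Kmx W t j i * mu W t j 0.
Proof. by rewrite /= mxE; apply: eq_bigr => j _; rewrite mxE. Qed.

Lemma TmxE t i j : (t.+1 < M)%N ->
  Tmx W t i j = (mu W t.+1 i 0)^-1 * Kmx W t j i * mu W t j 0.
Proof.
move=> tM; rewrite /Tmx /Dmu invmx_diag => [|i']; last first.
  by rewrite mxE gt_eqF ?mu_gt0.
by rewrite mul_diag_mx mul_mx_diag !mxE.
Qed.

Lemma Tmx_ge0 t i j : (t.+1 < M)%N -> 0 <= Tmx W t i j.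
Proof.
move=> tM; have tM' : (t < M)%N by apply: ltnW.
by rewrite TmxE // !mulr_ge0 ?invr_ge0 ?Kmx_ge0 ?ltW ?mu_gt0.
Qed.

Lemma sum_Tmx t i : (t.+1 < M)%N -> \sum_j Tmx W t i j = 1.
Proof.
move=> tM; under eq_bigr => j _ do rewrite TmxE // -mulrA.
by rewrite -mulr_sumr -muS mulVf // gt_eqF ?mu_gt0.
Qed.

Definition blk_weight (s : nat) : R := ((0 < s)%N + (s.+1 < M)%N)%:R.

Lemma blk_weight_gt0 s : 0 < blk_weight s.
Proof. by rewrite /blk_weight ltr0n; case: s => //=; rewrite M_ge2. Qed.

(* [blk_weight s * mu W s i 0] and [mu W s i 0 * Ablock s r i j] are the
   entries of B and A in C = B^-1 A. *)
Definition Ablock (s r : nat) (i j : 'I_n) : R :=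
  (if r == s.+1 then Kmx W s i j else 0) +
  (if (0 < s)%N && (r == s.-1) then Tmx W s.-1 i j else 0).

Lemma Ablock_ge0 s r i j : (s < M)%N -> 0 <= Ablock s r i j.
Proof.
move=> sM; rewrite /Ablock addr_ge0 //.
  by case: ifP => // _; apply: Kmx_ge0.
by case: ifP => // /andP[s_gt0 _]; apply: Tmx_ge0; lia.
Qed.

Lemma sum_Ablock s i : (s < M)%N ->
  \sum_(r < M) \sum_j Ablock s r i j = blk_weight s.
Proof.
move=> sM.
have row_sum (r : 'I_M) : \sum_j Ablock s r i j =
    (if r == s.+1 :> nat then 1 else 0) +
    (if (0 < s)%N && (r == s.-1 :> nat) then 1 else 0).
  rewrite big_split /=; congr (_ + _).
    by case: (_ == _); rewrite ?sum_Kmx ?big1.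
  case: (boolP (0 < s)%N) => [s_gt0|_] /=; last by rewrite big1.
  by case: (_ == _); rewrite ?sum_Tmx ?big1 //; lia.
under eq_bigr do rewrite row_sum.
rewrite big_split /= -!big_mkcond (big_ord1_eq _ (fun=> 1)).
rewrite (big_ord1_cond_eq _ (fun=> 1) (fun=> 0 < s)%N) /blk_weight.
have -> : (s.-1 < M)%N by lia.
have : (0 < s)%N || (s.+1 < M)%N by lia.
by case: (0 < s)%N; case: (s.+1 < M)%N => //= _; rewrite ?addn0 ?add0r ?addr0.
Qed.

Lemma Ablock_eq0 s r i j : r != s.+1 -> s != r.+1 -> Ablock s r i j = 0.
Proof.
move=> rs sr; rewrite /Ablock (negbTE rs) add0r.
by case: s {rs} sr => //= s; rewrite eqSS eq_sym => /negbTE->.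
Qed.

Lemma Ablock_balanced_succ s i j : (s.+1 < M)%N ->
  mu W s i 0 * Ablock s s.+1 i j = mu W s.+1 j 0 * Ablock s.+1 s j i.
Proof.
have ss2 : (s == s.+2) = false by lia.
have ss1 : (s.+1 == s.-1) = false by lia.
move=> sM; rewrite /Ablock !eqxx ss1 ss2 ltn0Sn andbF addr0 add0r TmxE //.
by rewrite !mulrA -!pred_Sn mulfV ?gt_eqF ?mu_gt0 // mul1r mulrC.
Qed.

Lemma Ablock_balanced s r i j : (s < M)%N -> (r < M)%N ->
  mu W s i 0 * Ablock s r i j = mu W r j 0 * Ablock r s j i.
Proof.
move=> sM rM; have [rE|rs] := eqVneq r s.+1.
  by subst r; apply: Ablock_balanced_succ.
have [sE|sr] := eqVneq s r.+1; first by subst s; rewrite Ablock_balanced_succ.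
by rewrite !Ablock_eq0 ?mulr0.
Qed.

Lemma Cblock_weighted s r i j : (s < M)%N -> (r < M)%N ->
  blk_weight s * Cblock M W s r i j = Ablock s r i j.
Proof.
move=> sM rM; rewrite /Cblock /blk_weight /Ablock.
case: s sM => [|s] sM /=.
  have M1_neq0 : (0 == M.-1)%N = false by lia.
  by rewrite M_ge2 mul1r M1_neq0 /= addr0; case: eqP; rewrite ?mxE.
rewrite eqSS.
have [sE|s_inner] : s.+1 = M.-1 \/ (s.+2 < M)%N by lia.
  have rs : (r == s.+2) = false by lia.
  have sM' : (s.+2 < M)%N = false by lia.
  have M2 : M.-2 = s by lia.
  rewrite rs sM' M2 -sE eqxx ltnn /= mul1r add0r.
  by case: eqP; rewrite ?mxE.
have sM1 : (s.+1 == M.-1) = false by lia.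
have sM1' : (s.+1 < M.-1)%N by lia.
rewrite s_inner sM1 sM1' /=.
case: (eqVneq r s) => [->|_]; rewrite ?eqxx ?mxE.
  have ss2 : (s == s.+2) = false by lia.
  by rewrite ss2 add0r; field.
rewrite addr0; case: eqP => _; rewrite ?mxE ?mulr0 //.
by field.
Qed.

Lemma sum_blk_of (V : nmodType) (F : 'I_M * 'I_n -> V) :
  \sum_(l : 'I_(M * n)) F (blk_of l) = \sum_(r < M) \sum_(j < n) F (r, j).
Proof.
pose idx (p : 'I_M * 'I_n) : 'I_(M * n) := cast_ord (mxvec_cast M n) (enum_rank p).
have idxK : cancel idx (@blk_of n M).
  by move=> p; rewrite /idx /blk_of cast_ordK enum_rankK.
have blk_ofK : cancel (@blk_of n M) idx.
  by move=> k; rewrite /idx /blk_of enum_valK cast_ordKV.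
rewrite (reindex idx (onW_bij _ (Bijective idxK blk_ofK))) /=.
under eq_bigr do rewrite idxK.
by rewrite pair_bigA; apply: eq_bigr => -[].
Qed.

Lemma CmxE k l : Cmx M W k l =
  (blk_weight (blk_of k).1)^-1 * Ablock (blk_of k).1 (blk_of l).1 (blk_of k).2 (blk_of l).2.
Proof. by rewrite mxE -Cblock_weighted // mulKf // gt_eqF ?blk_weight_gt0. Qed.

Lemma Cmx_ge0 k l : 0 <= Cmx M W k l.
Proof.
rewrite CmxE; apply: mulr_ge0; last exact: Ablock_ge0.
by rewrite invr_ge0 ltW ?blk_weight_gt0.
Qed.

Lemma sum_Cmx k : \sum_l Cmx M W k l = 1.
Proof.
under eq_bigr do rewrite CmxE.
set s := (blk_of k).1; set i := (blk_of k).2.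
rewrite -mulr_sumr (sum_blk_of (fun p => Ablock s p.1 i p.2)) sum_Ablock //.
by rewrite mulVf // gt_eqF ?blk_weight_gt0.
Qed.

Definition Cweight (k : 'I_(M * n)) : R :=
  blk_weight (blk_of k).1 * mu W (blk_of k).1 (blk_of k).2 0.

Lemma Cweight_gt0 k : 0 < Cweight k.
Proof. by rewrite mulr_gt0 ?blk_weight_gt0 ?mu_gt0. Qed.

Lemma Cmx_balanced k l : Cweight k * Cmx M W k l = Cweight l * Cmx M W l k.
Proof.
rewrite !CmxE mulrACA [RHS]mulrACA !mulfV ?gt_eqF ?blk_weight_gt0 // !mul1r.
exact: Ablock_balanced.
Qed.

Definition blk_sign (k : 'I_(M * n)) : R := (-1) ^+ (blk_of k).1.

Lemma blk_sign_sqr k : blk_sign k ^+ 2 = 1.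
Proof. by rewrite -exprM mulnC exprM sqrrN !expr1n. Qed.

Lemma Cmx_blk_sign k l : Cmx M W k l != 0 -> blk_sign k = - blk_sign l.
Proof.
rewrite CmxE /blk_sign; set s := (blk_of k).1; set r := (blk_of l).1.
move=> C_neq0; have [rE|rs] := eqVneq (r : nat) s.+1.
  by rewrite rE exprS mulN1r opprK.
have [sE|sr] := eqVneq (s : nat) r.+1; first by rewrite sE exprS mulN1r.
by move: C_neq0; rewrite Ablock_eq0 ?mulr0 ?eqxx.
Qed.

End TimeEvolvingGraph.

Theorem proposition1 (R : realType) (n M : nat) (W : nat -> 'M[R]_n) :
  (2 <= n)%N -> (2 <= M)%N ->
  (forall t, (t < M)%N -> forall i j, 0 <= W t i j) ->
  (forall t, (t < M)%N -> forall i, 0 < \sum_j W t i j) ->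
  (forall t, (t < M)%N -> forall i, 0 < mu W t i 0) ->
  (forall lambda : R[i], eigenvalue (cplx_mx (Cmx M W)) lambda ->
     exists2 r : R, lambda = Complex r 0 & -1 <= r <= 1) /\
  (forall lambda : R[i], eigenvalue (cplx_mx (Cmx M W)) lambda ->
     eigenvalue (cplx_mx (Cmx M W)) (- lambda)).
Proof.
move=> _ M_ge2 W_ge0 deg_gt0 mu_gt0; split=> a a_eig.
  have /complex_realP[r a_r] :=
    reversible_eigenvalue_real (Cweight_gt0 M_ge2 mu_gt0) (Cmx_balanced M_ge2 mu_gt0) a_eig.
  exists r => //.
  have := stochastic_eigenvalue_norm_le1 (Cmx_ge0 M_ge2 W_ge0 deg_gt0 mu_gt0)
    (sum_Cmx M_ge2 deg_gt0 mu_gt0) a_eig.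
  by rewrite a_r normr_real_complex -[1]/(1%:C) lecR ler_norml.
exact: bipartite_eigenvalue_opp (@blk_sign_sqr R n M) (Cmx_blk_sign M_ge2) a_eig.
Qed.
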